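(* Let $N=[n]$, let $v:2^N\to\mathbb{R}_+$ be a monotone submodular valuation with $v(\emptyset)=0$, and let $X$ be a decision map for $v$. Then in every pure Nash equilibrium $p$ of the pricing game defined by $v$ and $X$, the utility of each seller $i$ is $u_i(p)=v(\{i\}\mid N\setminus\{i\})$. In particular, for every pure Nash equilibrium $p$ and every $i$ with $v(\{i\}\mid N\setminus\{i\})>0$, we have $p_i=v(\{i\}\mid N\setminus\{i\})$ and $i\in X(p)$.
   Context: Pricing game: $N=[n]$ services, service $i$ controlled by seller $i$. Buyer valuation $v:2^N\to\mathbb{R}_+$, monotone, $v(\emptyset)=0$; submodular means $v(S\cup T)+v(S\cap T)\le v(S)+v(T)$ for all $S,T$. Marginal value: $v(T\mid S)=v(S\cup T)-v(S)$. For $p\in\mathbb{R}^n_+$, $p(S)=\sum_{j\in S}p_j$, $D(v;p)=\arg\max_{S\subseteq N}(v(S)-p(S))$. A decision map is $X:\mathbb{R}^n_+\to2^N$ with $X(p)\in D(v;p)$ for all $p$. Seller $i$'s utility is $u_i(p)=p_i\mathbf{1}\{i\in X(p)\}$; a pure Nash equilibrium is a $p$ with $u_i(p)\ge u_i(p_i',p_{-i})$ for all $i$ and $p_i'\in\mathbb{R}_+$. *)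

From mathcomp Require Import all_boot all_order all_algebra.
Set Implicit Arguments. Unset Strict Implicit. Unset Printing Implicit Defensive.
Import Order.TTheory GRing.Theory Num.Theory.
Local Open Scope ring_scope.

Section Pricing.
Variables (R : realFieldType) (n : nat).

Definition price := 'I_n -> R.

Definition nonneg_price (p : price) : Prop := forall j, 0 <= p j.

Definition monotone_val (v : {set 'I_n} -> R) : Prop :=
  forall S T : {set 'I_n}, S \subset T -> v S <= v T.

Definition submodular (v : {set 'I_n} -> R) : Prop :=
  forall S T : {set 'I_n}, v (S :|: T) + v (S :&: T) <= v S + v T.

Definition marg (v : {set 'I_n} -> R) (T S : {set 'I_n}) : R := v (S :|: T) - v S.

Definition pset (p : price) (S : {set 'I_n}) : R := \sum_(j in S) p j.

Definition in_demand (v : {set 'I_n} -> R) (p : price) (S : {set 'I_n}) : Prop :=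
  forall T : {set 'I_n}, v T - pset p T <= v S - pset p S.

Definition decision_map (v : {set 'I_n} -> R) (X : price -> {set 'I_n}) : Prop :=
  forall p, nonneg_price p -> in_demand v p (X p).

Definition utility (X : price -> {set 'I_n}) (i : 'I_n) (p : price) : R :=
  if i \in X p then p i else 0.

Definition upd (p : price) (i : 'I_n) (q : R) : price :=
  fun j => if j == i then q else p j.

Definition pure_NE (X : price -> {set 'I_n}) (p : price) : Prop :=
  nonneg_price p /\
  forall (i : 'I_n) (q : R), 0 <= q -> utility X i (upd p i q) <= utility X i p.

End Pricing.

(* Write m_i := v(N) - v(N \ i).  Seller i can always sell at any price below
   m_i, since by submodularity adding i to any bundle without it gains at least
   m_i; hence every equilibrium utility is at least m_i.  Conversely, let T be a
   best bundle avoiding i.  If the buyer strictly preferred X(p) to T, seller i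
   could raise p_i a little and still sell, so T is itself optimal.  An unsold
   seller j could lower her price to almost 0 and sell, so every unsold item
   adds nothing to an optimal bundle and is free when it lies in one.  Hence the
   marginal value of every e outside T is at most u_e(p), and subadditivity of
   marginals bounds v(N \ i) - v(T) by the utilities of the sellers outside T.
   Summing up gives u_i(p) <= v(X(p)) - v(N \ i) <= m_i. *)

From mathcomp Require Import all_boot all_order all_algebra.
From mathcomp Require Import lra.
Set Implicit Arguments. Unset Strict Implicit. Unset Printing Implicit Defensive.
Import Order.TTheory GRing.Theory Num.Theory.
Local Open Scope ring_scope.

Section Submodular.
Variables (R : realFieldType) (n : nat) (v : {set 'I_n} -> R).
Hypothesis subm : submodular v.

Lemma marg_setU_le (A B W : {set 'I_n}) : [disjoint A & B] ->
  marg v (A :|: B) W <= marg v A W + marg v B W.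
Proof.
move=> dAB; rewrite /marg.
have := subm (W :|: A) (W :|: B).
rewrite setUACA setUid -setUIr (disjoint_setI0 dAB) setU0; lra.
Qed.

Lemma marg_le_sum_marg1 (B W : {set 'I_n}) :
  marg v B W <= \sum_(e in B) marg v [set e] W.
Proof.
have -> : \sum_(e in B) marg v [set e] W = \sum_(e <- enum B) marg v [set e] W.
  by rewrite big_enum.
rewrite -[in leLHS](set_enum B); elim: (enum B) (enum_uniq B) => [_|e s IH].
  by rewrite big_nil /marg set_nil setU0 subrr.
move=> /andP[e_s uniq_s]; rewrite big_cons set_cons.
have dis : [disjoint [set e] & [set:: s]] by rewrite disjoints1 inE.
by apply: le_trans (marg_setU_le W dis) _; rewrite lerD2l IH.
Qed.

Lemma marg1_antimono (S T : {set 'I_n}) (a : 'I_n) : S \subset T -> a \notin T ->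
  marg v [set a] T <= marg v [set a] S.
Proof.
move=> sST aT; rewrite /marg.
have := subm (S :|: [set a]) T.
have -> : S :|: [set a] :|: T = T :|: [set a] by rewrite setUAC (setUidPr sST).
have -> : (S :|: [set a]) :&: T = S.
  have aT' : [disjoint [set a] & T] by rewrite disjoints1.
  by rewrite setIUl (setIidPl sST) (disjoint_setI0 aT') setU0.
lra.
Qed.

Lemma marg1_compl_le (S : {set 'I_n}) (i : 'I_n) : i \notin S ->
  marg v [set i] (~: [set i]) <= marg v [set i] S.
Proof.
move=> iS; apply: marg1_antimono; last by rewrite !inE eqxx.
by rewrite subsetC sub1set inE.
Qed.

End Submodular.

Lemma marg1_complE (R : realFieldType) (n : nat) (v : {set 'I_n} -> R) (i : 'I_n) :
  marg v [set i] (~: [set i]) = v setT - v (~: [set i]).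
Proof. by rewrite /marg setUC setUCr. Qed.

Section Prices.
Variables (R : realFieldType) (n : nat).
Implicit Types (p : price R n) (S T : {set 'I_n}) (i : 'I_n) (q : R).

Lemma upd_id p i q : upd p i q i = q.
Proof. by rewrite /upd eqxx. Qed.

Lemma nonneg_upd p i q : nonneg_price p -> 0 <= q -> nonneg_price (upd p i q).
Proof. by move=> p0 q0 j; rewrite /upd; case: eqP. Qed.

Lemma pset_upd_notin p i q T : i \notin T -> pset (upd p i q) T = pset p T.
Proof.
move=> iT; apply: eq_bigr => j jT; rewrite /upd; case: (j =P i) => // ji.
by rewrite -ji jT in iT.
Qed.

Lemma pset_upd_in p i q T : i \in T -> pset (upd p i q) T = pset p T - p i + q.
Proof.
move=> iT; rewrite /pset (bigD1 i iT) [in RHS](bigD1 i iT) /= upd_id.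
rewrite (eq_bigr p) => [|j /andP[_ ji]]; last by rewrite /upd (negbTE ji).
by move: (\sum_(j in T | j != i) p j) => s; lra.
Qed.

Lemma pset_setU1 p i S : i \notin S -> pset p (S :|: [set i]) = pset p S + p i.
Proof. by move=> iS; rewrite /pset setUC big_setU1 //= addrC. Qed.

End Prices.

Section Equilibrium.
Variables (R : realFieldType) (n : nat).
Variables (v : {set 'I_n} -> R) (X : price R n -> {set 'I_n}).
Hypotheses (subm : submodular v) (dm : decision_map v X).
Implicit Types (S T : {set 'I_n}) (i j e : 'I_n) (q : R).

Local Notation surplus p S := (v S - pset p S).
Local Notation marg_full i := (marg v [set i] (~: [set i])).

Lemma utility_ge0 (p : price R n) i : nonneg_price p -> 0 <= utility X i p.
Proof. by rewrite /utility; case: ifP. Qed.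

Lemma utility_upd (p : price R n) i q :
  utility X i (upd p i q) = if i \in X (upd p i q) then q else 0.
Proof. by rewrite /utility upd_id. Qed.

Lemma sum_utility (p : price R n) : \sum_e utility X e p = pset p (X p).
Proof. by rewrite /pset [RHS]big_mkcond. Qed.

Lemma sold_below_marg_full (p : price R n) i q : nonneg_price p ->
  0 <= q -> q < marg_full i -> i \in X (upd p i q).
Proof.
move=> p0 q0 qm; apply: contraT => iX; exfalso.
have := dm (nonneg_upd i p0 q0) (X (upd p i q) :|: [set i]).
rewrite pset_setU1 // upd_id.
have := marg1_compl_le subm iX; move: qm; rewrite /marg; lra.
Qed.

Variable p : price R n.
Hypothesis NE : pure_NE X p.

Lemma NE_utility_ge_marg_full i : marg_full i <= utility X i p.
Proof.
have [p0 dev] := NE; rewrite leNgt; apply/negP => um.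
have [uq qm] := midf_lt um.
have q0 : 0 <= (utility X i p + marg_full i) / 2.
  by apply: le_trans (ltW uq); apply: utility_ge0.
have := dev i _ q0; rewrite utility_upd sold_below_marg_full //.
by rewrite leNgt uq.
Qed.

Lemma NE_unsold_surplus j T : j \notin X p -> j \in T ->
  surplus p T + p j <= surplus p (X p).
Proof.
have [p0 dev] := NE => jX jT; rewrite leNgt; apply/negP => gap.
set eps := surplus p T + p j - surplus p (X p).
have eps0 : 0 < eps by rewrite subr_gt0.
have q0 : 0 <= eps / 2 by lra.
have := dev j _ q0; rewrite utility_upd /utility (negbTE jX).
case: ifP => [_|jX']; first lra.
have := dm (nonneg_upd j p0 q0) T; rewrite pset_upd_in // pset_upd_notin ?jX' //.
have := dm p0 (X (upd p j (eps / 2))); rewrite /eps; lra.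
Qed.

Lemma NE_best_avoiding_in_demand i T : i \in X p ->
  (forall S, i \notin S -> surplus p S <= surplus p T) -> in_demand v p T.
Proof.
have [p0 dev] := NE => iX Tbest S.
suff : surplus p (X p) <= surplus p T by have := dm p0 S; lra.
rewrite leNgt; apply/negP => gap.
set d := surplus p (X p) - surplus p T.
have q0 : 0 <= p i + d / 2 by have := p0 i; rewrite /d; lra.
have := dev i _ q0; rewrite utility_upd /utility iX.
case: ifP => [_|iX']; first by rewrite /d; lra.
have := dm (nonneg_upd i p0 q0) (X p); rewrite pset_upd_in // pset_upd_notin ?iX' //.
have := Tbest _ (negbT iX'); rewrite /d; lra.
Qed.

Lemma NE_demand_pset T : in_demand v p T -> pset p T = \sum_(e in T) utility X e p.
Proof.
have [p0 _] := NE => Topt; apply: eq_bigr => e eT; rewrite /utility.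
case: ifPn => // eX; apply/eqP; rewrite eq_le p0 andbT.
have := NE_unsold_surplus eX eT; have := Topt (X p); lra.
Qed.

Lemma NE_demand_marg1_le T e : in_demand v p T -> e \notin T ->
  marg v [set e] T <= utility X e p.
Proof.
move=> Topt eT; have := Topt (T :|: [set e]); rewrite pset_setU1 // /marg /utility.
case: ifPn => [_|eX]; first lra.
have := NE_unsold_surplus (T := T :|: [set e]) eX; rewrite pset_setU1 // !inE eqxx orbT.
have := Topt (X p); lra.
Qed.

Lemma NE_utility_le_marg_full (mono : monotone_val v) i : utility X i p <= marg_full i.
Proof.
have [p0 _] := NE; rewrite /utility; case: ifPn => iX; last first.
  by rewrite marg1_complE subr_ge0 mono ?subsetT.
have [T iT Tbest] := @arg_maxP _ R _ set0 (fun S => i \notin S)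
  (fun S => surplus p S) (negbT (in_set0 i)).
have Topt := NE_best_avoiding_in_demand iX Tbest.
have TiC : T \subset ~: [set i] by rewrite subsetC sub1set inE.
have margT : marg v (~: [set i]) T <= \sum_(e in ~: [set i] :\: T) utility X e p.
  apply: le_trans (marg_le_sum_marg1 subm _ _) _.
  rewrite (big_setID T) /= (setIidPr TiC) big1 ?add0r; last first.
    by move=> e eT; rewrite /marg (setUidPl _) ?subrr // sub1set.
  apply: ler_sum => e; rewrite inE => /andP[eT _]; exact: NE_demand_marg1_le.
have sumC : \sum_(e in ~: [set i]) utility X e p + p i = pset p (X p).
  have ui : utility X i p = p i by rewrite /utility iX.
  rewrite -sum_utility [RHS](bigD1 i) //= ui addrC; congr (_ + _).
  by apply: eq_bigl => e; rewrite !inE.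
move: sumC; rewrite (big_setID T) /= (setIidPr TiC) -NE_demand_pset //.
have := dm p0 T; have := mono _ _ (subsetT (X p)).
move: margT; rewrite marg1_complE /marg (setUidPr TiC); lra.
Qed.

End Equilibrium.

Theorem mainTheorem6 (R : realFieldType) (n : nat)
  (v : {set 'I_n} -> R) (X : price R n -> {set 'I_n}) :
  (forall S, 0 <= v S) -> v set0 = 0 ->
  monotone_val v -> submodular v ->
  decision_map v X ->
  forall p : price R n, pure_NE X p ->
    (forall i : 'I_n, utility X i p = marg v [set i] (~: [set i])) /\
    (forall i : 'I_n, 0 < marg v [set i] (~: [set i]) ->
       p i = marg v [set i] (~: [set i]) /\ i \in X p).
Proof.
move=> _ _ mono subm dm p NE.
have uE i : utility X i p = marg v [set i] (~: [set i]).
  apply/eqP; rewrite eq_le NE_utility_le_marg_full //.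
  exact: NE_utility_ge_marg_full.
split=> [|i]; first exact: uE.
rewrite -uE /utility.
by case: ifP => [|_]; [split | rewrite ltxx].
Qed.
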